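(* For every $C>1$ there is $n_C\in\mathbb N$ such that the following holds. If $G=(V_1,V_2,E)$ is a $C$-bipartite-Ramsey graph with $|V_1|,|V_2|\ge n_C$, then the edge density $e(G)/(|V_1||V_2|)$ lies between $(16C)^{-1}$ and $1-(16C)^{-1}$.
   Context: A bipartite graph $G=(V_1,V_2,E)$ has vertex set $V_1\sqcup V_2$ and edge set $E\subset V_1\times V_2$; $e(G)=|E|$. Given $C>0$, $G$ is called $C$-bipartite-Ramsey if for all integers $t_1\ge C\log_2|V_1|$ and $t_2\ge C\log_2|V_2|$ there are no $T_1\subset V_1$, $T_2\subset V_2$ with $|T_1|=t_1$, $|T_2|=t_2$ such that all pairs in $T_1\times T_2$ are edges, or all are non-edges (no induced $K_{t_1,t_2}$ or $\overline{K_{t_1,t_2}}$). *)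

From mathcomp Require Import all_boot.
From Stdlib Require Import Reals.
Set Implicit Arguments. Unset Strict Implicit. Unset Printing Implicit Defensive.

Definition log2 (x : R) : R := (ln x / ln 2)%R.

Definition homogeneous_pair (V1 V2 : finType) (E : {set V1 * V2})
  (T1 : {set V1}) (T2 : {set V2}) : Prop :=
  (forall x y, x \in T1 -> y \in T2 -> (x, y) \in E) \/
  (forall x y, x \in T1 -> y \in T2 -> (x, y) \notin E).

Definition bip_ramsey (C : R) (V1 V2 : finType) (E : {set V1 * V2}) : Prop :=
  forall t1 t2 : nat,
    (C * log2 (INR #|V1|) <= INR t1)%R ->
    (C * log2 (INR #|V2|) <= INR t2)%R ->
    ~ exists (T1 : {set V1}) (T2 : {set V2}),
        #|T1| = t1 /\ #|T2| = t2 /\ homogeneous_pair E T1 T2.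

Definition edge_density (V1 V2 : finType) (E : {set V1 * V2}) : R :=
  (INR #|E| / (INR #|V1| * INR #|V2|))%R.

From mathcomp Require Import all_boot zify.
From Stdlib Require Import Reals Lra ZArith.
(* Importing Stdlib after MathComp rebinds [m ^ n] on nat to [Nat.pow]; restore [expn]. *)
Import ssrnat.
Set Implicit Arguments. Unset Strict Implicit. Unset Printing Implicit Defensive.

(* Let n1 = |V1| <= n2 = |V2| and suppose e(G) <= n1 n2 / (16 C). By Markov's
   inequality more than half of the vertices of V2 have at most
   D = 2 e(G) / n2 <= n1 / (8 C) neighbours. Double counting the pairs (T, y)
   with T a t1-subset of V1 avoiding the neighbourhood of y yields a T with at
   least n2 'C(n1 - D, t1) / (2 'C(n1, t1)) common non-neighbours. As
   t1 ~ C log2 n1 and D + t1 <= n1 / (6 C), this binomial ratio is at least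
   about n1^(-2/5), so T has more than t2 ~ C log2 n2 common non-neighbours:
   an empty t1 x t2 rectangle, which a C-bipartite-Ramsey graph cannot contain.
   The upper bound on the density follows by applying this to the complement. *)

Lemma ffact_le_expn n t : n ^_ t <= n ^ t.
Proof.
rewrite ffact_prod -[t in n ^ t]card_ord -prod_nat_const.
by apply: leq_prod => i _; apply: leq_subr.
Qed.

Lemma expn_subn_le_ffact n t : (n - t) ^ t <= n ^_ t.
Proof.
rewrite ffact_prod -[t in _ ^ t]card_ord -prod_nat_const.
by apply: leq_prod => i _; apply: leq_sub2l; apply: ltnW.
Qed.

Lemma bin_mul_expn_le m n t : 'C(n, t) * (m - t) ^ t <= 'C(m, t) * n ^ t.
Proof.
rewrite -(leq_pmul2r (fact_gt0 t)) mulnAC bin_ffact [leqRHS]mulnAC bin_ffact mulnC.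
exact: leq_mul (expn_subn_le_ffact m t) (ffact_le_expn n t).
Qed.

Lemma bin_lt_of_expn_lt a b n D t :
  a * n ^ t < b * (n - D - t) ^ t -> a * 'C(n, t) < b * 'C(n - D, t).
Proof.
move=> lt_ab.
have t_le_n : t <= n.
  have : 0 < b * (n - D - t) ^ t by apply: leq_ltn_trans lt_ab.
  rewrite muln_gt0 expn_gt0; lia.
have bin_pos : 0 < 'C(n, t) by rewrite bin_gt0.
have expn_pos : 0 < n ^ t by rewrite expn_gt0; lia.
have lt1 : 'C(n, t) * (a * n ^ t) < 'C(n, t) * (b * (n - D - t) ^ t).
  by rewrite ltn_pmul2l.
have le2 : b * ('C(n, t) * (n - D - t) ^ t) <= b * ('C(n - D, t) * n ^ t).
  by rewrite leq_mul2l bin_mul_expn_le orbT.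
rewrite -(ltn_pmul2r expn_pos); nia.
Qed.

Lemma card_small_gt_half (T : finType) (f : T -> nat) D :
  2 * \sum_x f x < D.+1 * #|T| -> #|T| < 2 * #|[set x | f x <= D]|.
Proof.
move=> lt_sum; set S := [set x | f x <= D].
have big_ge : #|~: S| * D.+1 <= \sum_x f x.
  rewrite (bigID (mem (~: S))) /= -sum_nat_const.
  apply: leq_trans (leq_addr _ _); apply: leq_sum => x.
  by rewrite !inE -ltnNge.
have card_T := cardsC S.
have : D.+1 * #|~: S| < D.+1 * #|S| by nia.
rewrite ltn_pmul2l //; lia.
Qed.

Lemma card_set_sum (T : finType) (P : pred T) : #|[set x | P x]| = \sum_x (P x : nat).
Proof. by rewrite -sum1dep_card big_mkcond; apply: eq_bigr => x _; case: (P x). Qed.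

Lemma card_pairs_sum (A B : finType) (E : {set A * B}) :
  #|E| = \sum_(a : A) \sum_(b : B) ((a, b) \in E : nat).
Proof.
rewrite pair_bigA -sum1_card big_mkcond /=.
by apply: eq_bigr => -[a b] _; case: ((a, b) \in E).
Qed.

Lemma sum_card_col (A B : finType) (E : {set A * B}) :
  \sum_(b : B) #|[set a | (a, b) \in E]| = #|E|.
Proof.
by rewrite card_pairs_sum exchange_big; apply: eq_bigr => b _; rewrite card_set_sum.
Qed.

Lemma sum_card_row (A B : finType) (E : {set A * B}) :
  \sum_(a : A) #|[set b | (a, b) \in E]| = #|E|.
Proof. by rewrite card_pairs_sum; apply: eq_bigr => a _; rewrite card_set_sum. Qed.

Lemma exists_subset_card (T : finType) (X : {set T}) k :
  k <= #|X| -> exists2 Y : {set T}, Y \subset X & #|Y| = k.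
Proof.
move=> le_kX.
have : 0 < #|[set Y : {set T} | Y \subset X & #|Y| == k]| by rewrite cards_draws bin_gt0.
by case/card_gt0P => Y; rewrite inE => /andP[sub_YX /eqP card_Y]; exists Y.
Qed.

Lemma sum_draws_card_sub (A B : finType) (N : B -> {set A}) (t : nat) :
  \sum_(T : {set A} | #|T| == t) #|[set b | T \subset N b]|
    = \sum_(b : B) 'C(#|N b|, t).
Proof.
transitivity (\sum_(T : {set A} | #|T| == t) \sum_b (T \subset N b : nat)).
  by apply: eq_bigr => T _; apply: card_set_sum.
rewrite exchange_big /=; apply: eq_bigr => b _.
rewrite -cards_draws -sum1dep_card big_mkcond [RHS]big_mkcond /=; apply: eq_bigr => T _.
by case: (T \subset N b); case: (#|T| == t).
Qed.

Lemma exists_draw_sub_many (A B : finType) (N : B -> {set A}) t :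
  t <= #|A| ->
  exists2 T : {set A}, #|T| = t &
    \sum_(b : B) 'C(#|N b|, t) <= 'C(#|A|, t) * #|[set b | T \subset N b]|.
Proof.
move=> le_tA.
have [T0 _ /eqP card_T0] : exists2 T0 : {set A}, T0 \subset setT & #|T0| = t.
  by apply: exists_subset_card; rewrite cardsT.
have [T /eqP card_T max_T] := @arg_maxnP _ T0 (fun T : {set A} => #|T| == t)
  (fun T => #|[set b | T \subset N b]|) card_T0.
exists T => //; rewrite -sum_draws_card_sub -card_draws -sum_nat_cond_const.
exact: leq_sum.
Qed.

Lemma empty_rectangle_of_sparse (A B : finType) (r : A -> B -> bool) D t1 t2 :
  2 * \sum_(b : B) #|[set a | r a b]| < D.+1 * #|B| ->
  2 * t2 * 'C(#|A|, t1) < #|B| * 'C(#|A| - D, t1) ->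
  exists T1 : {set A}, exists T2 : {set B},
    [/\ #|T1| = t1, #|T2| = t2 & forall a b, a \in T1 -> b \in T2 -> ~~ r a b].
Proof.
move=> sparse bin_lt.
pose N b := ~: [set a | r a b].
set S := [set b | #|[set a | r a b]| <= D].
have half_S : #|B| < 2 * #|S| := card_small_gt_half sparse.
have le_t1A : t1 <= #|A|.
  have : 0 < #|B| * 'C(#|A| - D, t1) by apply: leq_ltn_trans bin_lt.
  rewrite muln_gt0 bin_gt0; lia.
have [T1 card_T1 many] := exists_draw_sub_many N le_t1A.
have low_S : #|S| * 'C(#|A| - D, t1) <= \sum_b 'C(#|N b|, t1).
  rewrite -sum_nat_const [leqRHS](bigID (mem S)) /=.
  apply: leq_trans (leq_addr _ _); apply: leq_sum => b; rewrite inE => deg_b.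
  by apply: leq_bin2l; rewrite /N -(cardsC [set a | r a b]); lia.
have many_T1 : t2 < #|[set b | T1 \subset N b]|.
  have : 'C(#|A|, t1) * t2 < 'C(#|A|, t1) * #|[set b | T1 \subset N b]|.
    have := leq_mul (ltnW half_S) (leqnn 'C(#|A| - D, t1)); nia.
  by rewrite ltn_mul2l => /andP[].
have [T2 sub_T2 card_T2] := exists_subset_card (ltnW many_T1).
exists T1, T2; split=> // a b a_T1 /(subsetP sub_T2).
by rewrite inE => /subsetP/(_ a a_T1); rewrite !inE.
Qed.

Section RealEstimates.
Local Open Scope R_scope.

Lemma ln_le_tangent k z : 0 < k -> 0 < z -> ln z <= z / k + ln k - 1.
Proof.
move=> k_gt0 z_gt0; have zk_gt0 : 0 < z / k by apply: Rdiv_lt_0_compat.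
have := exp_ineq1_le (ln (z / k)).
rewrite exp_ln // ln_mult ?ln_Rinv //; [lra | exact: Rinv_0_lt_compat].
Qed.

Lemma ln_le x y : 0 < x -> x <= y -> ln x <= ln y.
Proof.
move=> x_gt0 /Rle_lt_or_eq_dec[lt_xy | ->]; last exact: Rle_refl.
exact/Rlt_le/ln_increasing.
Qed.

Lemma ln_gt0 x : 1 < x -> 0 < ln x.
Proof. by move=> x_gt1; rewrite -ln_1; apply: ln_increasing; lra. Qed.

Lemma log2_le_2ln x : 1 <= x -> log2 x <= 2 * ln x.
Proof.
move=> x_ge1; have ln2_gt := ln_lt_2; have ln2_pos : 0 < ln 2 by apply: ln_gt0; lra.
have lnx_ge0 : 0 <= ln x by rewrite -ln_1; apply: ln_le; lra.
rewrite /log2; apply: (Rmult_le_reg_r (ln 2)) => //.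
rewrite /Rdiv Rmult_assoc Rinv_l; nra.
Qed.

Lemma affine_ln_le a b x :
  0 < a -> 0 < x -> 2 * (a * ln (2 * a) + b) <= x -> a * ln x + b <= x.
Proof.
move=> a_gt0 x_gt0 le_x; have := @ln_le_tangent (2 * a) x ltac:(lra) x_gt0.
have -> : x / (2 * a) = x / 2 / a by field; lra.
move=> tangent; have : a * ln x <= x / 2 + a * ln (2 * a) - a.
  have -> : x / 2 + a * ln (2 * a) - a = a * (x / 2 / a + ln (2 * a) - 1) by field; lra.
  by apply: Rmult_le_compat_l; lra.
lra.
Qed.

Variable C : R.
Hypothesis C_gt1 : 1 < C.

Lemma ln_ratio_pow_le x s (k : nat) :
  0 < x -> 0 <= s -> s * (6 * C) <= x -> INR k <= 2 * C * ln x + 1 ->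
  INR k * (ln x - ln (x - s)) <= 2 / 5 * ln x + 1 / 5.
Proof.
move=> x_gt0 s_ge0 s_small k_le; have k_ge0 := pos_INR k.
have xs_gt : 5 / 6 * x <= x - s by nra.
have ratio : ln x - ln (x - s) <= / (5 * C).
  have := @ln_le_tangent (x - s) x ltac:(lra) x_gt0.
  have -> : x / (x - s) = 1 + s / (x - s) by field; lra.
  suff : s / (x - s) <= / (5 * C) by lra.
  apply: (Rmult_le_reg_r ((x - s) * (5 * C))); first nra.
  have -> : s / (x - s) * ((x - s) * (5 * C)) = s * (5 * C) by field; lra.
  have -> : / (5 * C) * ((x - s) * (5 * C)) = x - s by field; lra.
  nra.
apply: (Rle_trans _ (INR k * / (5 * C))); first exact: Rmult_le_compat_l.
apply: (Rmult_le_reg_r (5 * C)); first lra.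
have -> : INR k * / (5 * C) * (5 * C) = INR k by field; lra.
nra.
Qed.

Lemma ln_double_le y t :
  1 <= ln y -> 0 < t -> t <= 2 * C * ln y + 1 ->
  ln (2 * t) <= ln (4 * C + 2) + ln 4 - 1 + ln y / 4.
Proof.
move=> lny_ge1 t_gt0 t_le.
have : ln (2 * t) <= ln ((4 * C + 2) * ln y) by apply: ln_le; [lra | nra].
rewrite (ln_mult (4 * C + 2)); [|lra|lra].
have := @ln_le_tangent 4 (ln y) ltac:(lra) ltac:(lra); lra.
Qed.

(* For [t <= 2 C ln y + 1], [ln y >= ramsey_log_const] makes
   [ln (2 t) + 2/5 ln y + 1/5 < ln y]. *)
Definition ramsey_log_const := 3 * (ln (4 * C + 2) + ln 4) + 3.

Lemma ramsey_log_const_ge3 : 3 <= ramsey_log_const.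
Proof.
have := @ln_gt0 (4 * C + 2) ltac:(lra); have := @ln_gt0 4 ltac:(lra).
rewrite /ramsey_log_const; lra.
Qed.

Lemma pow_shrink_lt x y s t (k : nat) :
  0 < x <= y -> 0 <= s -> s * (6 * C) <= x -> INR k <= 2 * C * ln x + 1 ->
  0 < t -> t <= 2 * C * ln y + 1 -> ramsey_log_const <= ln y ->
  2 * t * x ^ k < y * (x - s) ^ k.
Proof.
move=> [x_gt0 le_xy] s_ge0 s_small k_le t_gt0 t_le lny_ge.
have xs_gt0 : 0 < x - s by nra.
have ln_2t := @ln_double_le y t ltac:(have := ramsey_log_const_ge3; lra) t_gt0 t_le.
have ln_ratio := ln_ratio_pow_le x_gt0 s_ge0 s_small k_le.
have ln_xy := ln_le x_gt0 le_xy.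
have xk_gt0 := pow_lt _ k x_gt0; have xsk_gt0 := pow_lt _ k xs_gt0.
have t2_gt0 : 0 < 2 * t by lra.
have y_gt0 : 0 < y by lra.
apply: ln_lt_inv; [nra | nra |].
rewrite (ln_mult _ _ t2_gt0 xk_gt0) (ln_mult _ _ y_gt0 xsk_gt0) !ln_pow //.
have := ramsey_log_const_ge3; rewrite /ramsey_log_const in lny_ge *; lra.
Qed.
End RealEstimates.

Section Thresholds.
Local Open Scope R_scope.

Definition up_nat (x : R) : nat := Z.to_nat (up x).

Lemma up_nat_bounds x : 0 <= x -> x < INR (up_nat x) <= x + 1.
Proof.
move=> x_ge0; have [up_gt up_le] := archimed x.
have up_ge0 : (0 <= up x)%Z by apply: le_IZR; lra.
by rewrite /up_nat INR_IZR_INZ Z2Nat.id //; lra.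
Qed.

Lemma lt_INR_of_up_nat_le x n : (up_nat x <= n)%nat -> x < INR n.
Proof.
move=> /leP le_n; have [up_gt _] := archimed x.
case: (Z_le_gt_dec 0 (up x)) => [up_ge0 | up_lt0].
  apply: (Rlt_le_trans _ _ _ up_gt).
  by rewrite -(Z2Nat.id _ up_ge0) -INR_IZR_INZ; apply: le_INR.
have : IZR (up x) < 0 by apply: IZR_lt; lia.
have := pos_INR n; lra.
Qed.

Lemma log2_ge0 (n : nat) : (1 <= n)%nat -> 0 <= log2 (INR n).
Proof.
move=> /leP/(le_INR 1)/= n_ge1; have ln2_pos : 0 < ln 2 by apply: ln_gt0; lra.
rewrite /log2; apply: Rmult_le_pos; last by apply/Rlt_le/Rinv_0_lt_compat.
by rewrite -ln_1; apply: ln_le; lra.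
Qed.

Definition ramsey_size (C : R) (n : nat) : nat := up_nat (C * log2 (INR n)).

Lemma ramsey_size_bounds C n : 1 < C -> (1 <= n)%nat ->
  0 <= C * log2 (INR n) < INR (ramsey_size C n) /\
  INR (ramsey_size C n) <= 2 * C * ln (INR n) + 1.
Proof.
move=> C_gt1 n_ge1; rewrite /ramsey_size; have log_ge0 := log2_ge0 n_ge1.
have Clog_ge0 : 0 <= C * log2 (INR n) by apply: Rmult_le_pos; lra.
have [lt_size le_size] := up_nat_bounds Clog_ge0.
have log_le : log2 (INR n) <= 2 * ln (INR n).
  by apply: log2_le_2ln; apply: (le_INR 1); apply/leP.
split; [by split | nra].
Qed.

(* By [affine_ln_le] with [a = 48 C^2] and [b = 24 C], every [n] beyond this
   constant satisfies [(2 C ln n + 1) * 24 C <= n]. *)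
Definition ramsey_linear_const C := 2 * (48 * C ^ 2 * ln (96 * C ^ 2) + 24 * C).

Definition ramsey_threshold C : nat :=
  maxn 2 (maxn (up_nat (exp (ramsey_log_const C))) (up_nat (ramsey_linear_const C))).

Lemma ramsey_threshold_spec C n : 1 < C -> (ramsey_threshold C <= n)%nat ->
  [/\ (2 <= n)%nat, ramsey_log_const C <= ln (INR n)
    & INR (ramsey_size C n) * (24 * C) <= INR n].
Proof.
move=> C_gt1; rewrite !geq_max => /and3P[n_ge2 /lt_INR_of_up_nat_le n_gt_exp
  /lt_INR_of_up_nat_le n_gt_lin].
split=> //.
  by rewrite -(ln_exp (ramsey_log_const C)); apply/Rlt_le/ln_increasing => //; apply: exp_pos.
have [_ size_le] := ramsey_size_bounds C_gt1 (ltnW n_ge2).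
have n_gt0 : 0 < INR n by apply: lt_0_INR; apply/ltP; apply: ltnW.
have := @affine_ln_le (48 * C ^ 2) (24 * C) (INR n) ltac:(nra) n_gt0.
rewrite (_ : 2 * (48 * C ^ 2) = 96 * C ^ 2); last ring.
move/(_ (Rlt_le _ _ n_gt_lin)); nra.
Qed.
End Thresholds.

Lemma INR_muln m n : INR (m * n) = (INR m * INR n)%R.
Proof. exact: mult_INR. Qed.

Lemma INR_subn m n : n <= m -> INR (m - n) = (INR m - INR n)%R.
Proof. by move=> /leP; apply: minus_INR. Qed.

Lemma INR_expn m n : INR (m ^ n) = (INR m ^ n)%R.
Proof. by elim: n => [|n IHn] //; rewrite expnS INR_muln IHn. Qed.

Lemma ramsey_size_bin_lt C n1 n2 e :
  (1 < C)%R -> ramsey_threshold C <= n1 -> n1 <= n2 ->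
  (16 * C * INR e <= INR n1 * INR n2)%R ->
  2 * ramsey_size C n2 * 'C(n1, ramsey_size C n1)
    < n2 * 'C(n1 - (2 * e) %/ n2, ramsey_size C n1).
Proof.
move=> C_gt1 n1_large le_n12 sparse; have n2_large := leq_trans n1_large le_n12.
have [n1_ge2 _ t1_small] := ramsey_threshold_spec C_gt1 n1_large.
have [n2_ge2 ln_n2_large _] := ramsey_threshold_spec C_gt1 n2_large.
have [_ t1_le] := ramsey_size_bounds C_gt1 (ltnW n1_ge2).
have [[t2_ge0 t2_gt] t2_le] := ramsey_size_bounds C_gt1 (ltnW n2_ge2).
move: t1_small t1_le t2_gt t2_le.
set t1 := ramsey_size C n1; set t2 := ramsey_size C n2; set D := (2 * e) %/ n2.
move=> t1_small t1_le t2_gt t2_le.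
have n1_gt0 : (0 < INR n1)%R by apply/lt_0_INR/ltP/ltnW.
have le_n12R : (INR n1 <= INR n2)%R by apply/le_INR/leP.
have D_small : (INR D * (8 * C) <= INR n1)%R.
  have le_Dn2 : (INR D * INR n2 <= 2 * INR e)%R.
    rewrite -INR_muln (_ : (2 * INR e)%R = INR (2 * e)); last by rewrite INR_muln.
    exact/le_INR/leP/leq_divM.
  apply: (Rmult_le_reg_r (INR n2)); nra.
have t1_ge0 := pos_INR t1; have D_ge0 := pos_INR D.
have Dt1_le : D + t1 <= n1 by apply/leP/INR_le; rewrite plus_INR; nra.
apply: bin_lt_of_expn_lt; apply/ltP/INR_lt.
rewrite !INR_muln !INR_expn !INR_subn; [|lia|lia].
rewrite (_ : INR n1 - INR D - INR t1 = INR n1 - (INR D + INR t1))%R; last ring.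
rewrite (_ : INR 2 = 2%R) //.
by apply: (pow_shrink_lt C_gt1) => //; [lra | nra | lra].
Qed.

Lemma sparse_rel_has_empty_rectangle C (A B : finType) (r : A -> B -> bool) :
  (1 < C)%R -> ramsey_threshold C <= #|A| -> #|A| <= #|B| ->
  (16 * C * INR (\sum_(b : B) #|[set a | r a b]|) <= INR #|A| * INR #|B|)%R ->
  exists T1 : {set A}, exists T2 : {set B},
    [/\ #|T1| = ramsey_size C #|A|, #|T2| = ramsey_size C #|B|
      & forall a b, a \in T1 -> b \in T2 -> ~~ r a b].
Proof.
move=> C_gt1 A_large le_AB sparse.
have B_gt0 : 0 < #|B| by apply: leq_trans le_AB; apply: leq_trans A_large; rewrite leq_max.
apply: (empty_rectangle_of_sparse (D := (2 * \sum_b #|[set a | r a b]|) %/ #|B|)).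
  exact: ltn_ceil.
exact: ramsey_size_bin_lt.
Qed.

Lemma sparse_has_empty_rectangle C (V1 V2 : finType) (E : {set V1 * V2}) :
  (1 < C)%R -> ramsey_threshold C <= #|V1| -> ramsey_threshold C <= #|V2| ->
  (16 * C * INR #|E| <= INR #|V1| * INR #|V2|)%R ->
  exists T1 : {set V1}, exists T2 : {set V2},
    [/\ #|T1| = ramsey_size C #|V1|, #|T2| = ramsey_size C #|V2|
      & forall x y, x \in T1 -> y \in T2 -> (x, y) \notin E].
Proof.
move=> C_gt1 V1_large V2_large sparse.
have [le_12 | lt_21] := leqP #|V1| #|V2|.
  apply: (sparse_rel_has_empty_rectangle (r := fun x y => (x, y) \in E)) => //.
  by rewrite sum_card_col.
have [||T2 [T1 [card_T2 card_T1 empty]]] :=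
  @sparse_rel_has_empty_rectangle C V2 V1 (fun y x => (x, y) \in E) C_gt1 V2_large.
- exact: ltnW.
- by rewrite /= sum_card_row [(INR #|V2| * _)%R]Rmult_comm.
by exists T1, T2; split=> // x y x_T1 y_T2; apply: empty.
Qed.

Lemma bip_ramsey_dense C (V1 V2 : finType) (E : {set V1 * V2}) :
  (1 < C)%R -> ramsey_threshold C <= #|V1| -> ramsey_threshold C <= #|V2| ->
  bip_ramsey C E -> (INR #|V1| * INR #|V2| < 16 * C * INR #|E|)%R.
Proof.
move=> C_gt1 V1_large V2_large ramsey; apply: Rnot_le_lt => sparse.
have [T1 [T2 [card_T1 card_T2 empty]]] :=
  sparse_has_empty_rectangle C_gt1 V1_large V2_large sparse.
have [n1_ge2 _ _] := ramsey_threshold_spec C_gt1 V1_large.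
have [n2_ge2 _ _] := ramsey_threshold_spec C_gt1 V2_large.
have [[_ t1_gt] _] := ramsey_size_bounds C_gt1 (ltnW n1_ge2).
have [[_ t2_gt] _] := ramsey_size_bounds C_gt1 (ltnW n2_ge2).
apply: (ramsey _ _ (Rlt_le _ _ t1_gt) (Rlt_le _ _ t2_gt)).
by exists T1, T2; split; [|split; [|right]].
Qed.

Lemma bip_ramsey_setC C (V1 V2 : finType) (E : {set V1 * V2}) :
  bip_ramsey C E -> bip_ramsey C (~: E).
Proof.
move=> ramsey t1 t2 t1_ge t2_ge [T1 [T2 [card_T1 [card_T2 hom]]]].
apply: (ramsey t1 t2 t1_ge t2_ge); exists T1, T2; split; [|split] => //.
case: hom => [edges | non_edges]; [right | left] => x y x_T1 y_T2.
  by have := edges x y x_T1 y_T2; rewrite inE.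
by have := non_edges x y x_T1 y_T2; rewrite inE negbK.
Qed.

Lemma ratio_between_inv c e d :
  (0 < c -> 0 < d -> d < c * e -> d < c * (d - e) -> / c <= e / d <= 1 - / c)%R.
Proof.
move=> c_gt0 d_gt0 lt_ce lt_cde.
have cd_gt0 : (0 < c * d)%R by apply: Rmult_lt_0_compat.
have ed_cd : (e / d * (c * d) = c * e)%R by field; lra.
split; apply: (Rmult_le_reg_r (c * d)) => //; rewrite ed_cd.
  by rewrite (_ : / c * (c * d) = d)%R; [lra | field; lra].
by rewrite (_ : (1 - / c) * (c * d) = c * d - d)%R; [lra | field; lra].
Qed.

Theorem lemma2p1 :
  forall C : R, (1 < C)%R ->
  exists nC : nat,
    forall (V1 V2 : finType) (E : {set V1 * V2}),
      bip_ramsey C E ->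
      nC <= #|V1| -> nC <= #|V2| ->
      (/ (16 * C) <= edge_density E <= 1 - / (16 * C))%R.
Proof.
move=> C C_gt1; exists (ramsey_threshold C) => V1 V2 E ramsey V1_large V2_large.
have dense := bip_ramsey_dense C_gt1 V1_large V2_large ramsey.
have co_dense := bip_ramsey_dense C_gt1 V1_large V2_large (bip_ramsey_setC ramsey).
have card_setC : INR #|~: E| = (INR #|V1| * INR #|V2| - INR #|E|)%R.
  by rewrite -INR_muln -card_prod -(cardsC E) plus_INR; ring.
rewrite card_setC in co_dense.
by apply: ratio_between_inv; [lra | nra | |].
Qed.
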